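(* In the setting of the Jordan plane $A_J=k\langle x_1,x_2\rangle/(x_2x_1-x_1x_2-x_1^2)$ with a right $K$-comodule algebra structure $\rho(x_i)=x_1\otimes a_{1i}+x_2\otimes a_{2i}$, $K$ a Hopf algebra with bijective antipode $S$, and homological codeterminant ${\sf D}$, we have $$S^2(a_{11})={\sf D}(a_{11}-2a_{21}){\sf D}^{-1},\quad S^2(a_{12})={\sf D}(a_{12}+2a_{11}-2a_{22}-4a_{21}){\sf D}^{-1},$$ $$S^2(a_{21})={\sf D}a_{21}{\sf D}^{-1},\quad S^2(a_{22})={\sf D}(a_{22}+2a_{21}){\sf D}^{-1}.$$
   Context: The Ext-algebra $E$ of $A_J$ is a left $K$-comodule algebra via $\rho^!(x_i^* )=\sum_s a_{is}\otimes x_s^*$ on $E_1=(A_1)^*$; the homological codeterminant is the grouplike ${\sf D}\in K$ with $\rho^!(\mathfrak e)={\sf D}\otimes\mathfrak e$ for $\mathfrak e$ spanning $E_2$. *)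

From HB Require Import structures.
From mathcomp Require Import all_boot all_order all_algebra.
Set Implicit Arguments. Unset Strict Implicit. Unset Printing Implicit Defensive.
Import Order.TTheory GRing.Theory Num.Theory.
Local Open Scope ring_scope.

Definition lin (k : fieldType) (U V : lmodType k) (f : U -> V) : Prop :=
  forall (c : k) (u v : U), f (c *: u + v) = c *: f u + f v.

Definition is_tensor2 (k : fieldType) (U V W : lmodType k) (t : U -> V -> W)
  : Prop :=
  [/\ forall v : V, lin (fun u : U => t u v),
      forall u : U, lin (t u) &
      forall (X : lmodType k) (f : U -> V -> X),
        (forall v : V, lin (fun u : U => f u v)) -> (forall u : U, lin (f u)) ->
        (exists2 g : W -> X, lin g & forall u v, g (t u v) = f u v) /\
        (forall g1 g2 : W -> X, lin g1 -> lin g2 ->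
           (forall u v, g1 (t u v) = g2 (t u v)) -> g1 =1 g2)].

Definition is_tensor3 (k : fieldType) (U V Y W : lmodType k)
  (t : U -> V -> Y -> W) : Prop :=
  [/\ forall v y, lin (fun u : U => t u v y),
      forall u y, lin (fun v : V => t u v y),
      forall u v, lin (t u v) &
      forall (X : lmodType k) (f : U -> V -> Y -> X),
        (forall v y, lin (fun u : U => f u v y)) ->
        (forall u y, lin (fun v : V => f u v y)) ->
        (forall u v, lin (f u v)) ->
        (exists2 g : W -> X, lin g & forall u v y, g (t u v y) = f u v y) /\
        (forall g1 g2 : W -> X, lin g1 -> lin g2 ->
           (forall u v y, g1 (t u v y) = g2 (t u v y)) -> g1 =1 g2)].

(*  hKK / htens : the algebra K (x) K, hT3 / ht3 : K (x) K (x) K.             *)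
(*  The auxiliary maps (hlam_r, ..., hid_S) are the linear maps               *)
(*  - (x) c, a (x) -, Delta (x) id, id (x) Delta, eps (x) id, id (x) eps,     *)
(*  m o (S (x) id), m o (id (x) S); they are uniquely determined by their     *)
(*  values on pure tensors (universal property), so carrying them as data     *)
(*  loses no generality.                                                       *)
Record hopf_algebra (k : fieldType) (K : algType k) := HopfAlgebra {
  hKK : algType k;
  htens : K -> K -> hKK;
  hT3 : lmodType k;
  ht3 : K -> K -> K -> hT3;
  hDelta : K -> hKK;
  heps : K -> k;
  hS : K -> K;
  hlam_r : K -> hKK -> hT3;
  hlam_l : K -> hKK -> hT3;
  hDelta_id : hKK -> hT3;
  hid_Delta : hKK -> hT3;
  heps_id : hKK -> K;
  hid_eps : hKK -> K;
  hS_id : hKK -> K;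
  hid_S : hKK -> K;
  htens_univ : is_tensor2 htens;
  htens_mul : forall a b c d, htens a b * htens c d = htens (a * c) (b * d);
  htens_one : htens 1 1 = 1;
  ht3_univ : is_tensor3 ht3;
  hDelta_lin : lin hDelta;
  hDelta_mul : forall x y, hDelta (x * y) = hDelta x * hDelta y;
  hDelta_one : hDelta 1 = 1;
  heps_lin : forall (c : k) x y, heps (c *: x + y) = c * heps x + heps y;
  heps_mul : forall x y, heps (x * y) = heps x * heps y;
  heps_one : heps 1 = 1;
  hS_lin : lin hS;
  hlam_r_lin : forall c, lin (hlam_r c);
  hlam_r_tens : forall a b c, hlam_r c (htens a b) = ht3 a b c;
  hlam_l_lin : forall a, lin (hlam_l a);
  hlam_l_tens : forall a b c, hlam_l a (htens b c) = ht3 a b c;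
  hDelta_id_lin : lin hDelta_id;
  hDelta_id_tens : forall a b, hDelta_id (htens a b) = hlam_r b (hDelta a);
  hid_Delta_lin : lin hid_Delta;
  hid_Delta_tens : forall a b, hid_Delta (htens a b) = hlam_l a (hDelta b);
  heps_id_lin : lin heps_id;
  heps_id_tens : forall a b, heps_id (htens a b) = heps a *: b;
  hid_eps_lin : lin hid_eps;
  hid_eps_tens : forall a b, hid_eps (htens a b) = heps b *: a;
  hS_id_lin : lin hS_id;
  hS_id_tens : forall a b, hS_id (htens a b) = hS a * b;
  hid_S_lin : lin hid_S;
  hid_S_tens : forall a b, hid_S (htens a b) = a * hS b;
  hcoassoc : forall x, hDelta_id (hDelta x) = hid_Delta (hDelta x);
  hcounit_l : forall x, heps_id (hDelta x) = x;
  hcounit_r : forall x, hid_eps (hDelta x) = x;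
  hantipode_l : forall x, hS_id (hDelta x) = heps x *: 1;
  hantipode_r : forall x, hid_S (hDelta x) = heps x *: 1
}.

(* Jordan plane A_J = k<x1,x2>/(x2x1 - x1x2 - x1^2).  Generators are indexed *)
(* by 'I_2 (index 0 = x1, index 1 = x2).  The degree-2 part (A_J)_2 has the   *)
(* basis x1^2, x1x2, x2^2 (indexed by 'I_3), and                              *)
(*   jordan_coord s t b = coordinate of x_s x_t on basis vector b,           *)
(* using x2x1 = x1x2 + x1^2.                                                  *)
Definition jordan_coord (k : fieldType) (s t : 'I_2) (b : 'I_3) : k :=
  match nat_of_ord s, nat_of_ord t, nat_of_ord b with
  | 0%N, 0%N, 0%N => 1
  | 0%N, 1%N, 1%N => 1
  | 1%N, 0%N, 0%N => 1
  | 1%N, 0%N, 1%N => 1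
  | 1%N, 1%N, 2%N => 1
  | _, _, _ => 0
  end.

(* With rho(x_i) = sum_s x_s (x) a s i, the element rho(x_i) rho(x_j) of     *)
(* (A_J)_2 (x) K is sum_b (basis b) (x) rho_prod2 a i j b.                    *)
Definition rho_prod2 (k : fieldType) (K : algType k) (a : 'I_2 -> 'I_2 -> K)
  (i j : 'I_2) (b : 'I_3) : K :=
  \sum_(s < 2) \sum_(t < 2) jordan_coord k s t b *: (a s i * a t j).

(* rho(x_i) = x_1 (x) a_1i + x_2 (x) a_2i defines a right K-comodule algebra *)
(* structure on A_J: rho is an algebra map (it kills the defining relation    *)
(* x2x1 - x1x2 - x1^2), coassociative and counital.  Since rho is determined  *)
(* by its values on the generators, these axioms amount to the conditions     *)
(* below (coassociativity/counit on generators, x1, x2 linearly independent). *)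
Definition jordan_comodule_algebra (k : fieldType) (K : algType k)
  (H : hopf_algebra K) (a : 'I_2 -> 'I_2 -> K) : Prop :=
  [/\ forall b : 'I_3,
        rho_prod2 a 1 0 b - rho_prod2 a 0 1 b - rho_prod2 a 0 0 b = 0,
      forall i j : 'I_2, hDelta H (a i j) = \sum_(l < 2) htens H (a i l) (a l j) &
      forall i j : 'I_2, heps H (a i j) = (i == j)%:R].

(* Ext-algebra E of A_J: A_J is Koszul, so E = A_J^! = T(V^* )/(R^perp)      *)
(* (pairing <x_i^* x_j^*, x_k x_l> = d_ik d_jl), where R = k(x2x1-x1x2-x1^2). *)
(* E_1 = (A_1)^* with basis x1^*, x2^*, and E_2 is spanned by                 *)
(* e := x2^* x1^*, with multiplication E_1 x E_1 -> E_2 given by               *)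
(*   x_s^* x_t^* = ext_coeff s t . e :                                        *)
(*   x1^*x1^* = -e, x1^*x2^* = -e, x2^*x1^* = e, x2^*x2^* = 0.                *)
Definition ext_coeff (k : fieldType) (s t : 'I_2) : k :=
  match nat_of_ord s, nat_of_ord t with
  | 0%N, 0%N => -1
  | 0%N, 1%N => -1
  | 1%N, 0%N => 1
  | _, _ => 0
  end.

(* Homological codeterminant: rho^!(x_i^* ) = sum_s a i s (x) x_s^*, so       *)
(* rho^!(e) = rho^!(x2^* ) rho^!(x1^* ) = sum_(s,t) a 1 s a 0 t (x) x_s^* x_t^* *)
(*          = D (x) e   with D as below.                                        *)
Definition hom_codet (k : fieldType) (K : algType k) (a : 'I_2 -> 'I_2 -> K) : K :=
  \sum_(s < 2) \sum_(t < 2) ext_coeff k s t *: (a 1 s * a 0 t).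

(* Since a is a comatrix, S(a) is its two-sided inverse, the transpose of S(a)
   is again a comatrix, and S reverses products of entries of a.  The comodule
   algebra condition says a W a^T = D W, where W is the coefficient matrix of the
   defining relation; coassociativity then makes D grouplike, so S D = D^-1.
   Applying S once and twice to a W a^T = D W and cancelling with these inverse
   relations gives S^2(a) = D (N a N^-1) D^-1 with N = W W^-T, and for the Jordan
   plane N = [[-1, 2], [0, -1]]. *)

From HB Require Import structures.
From mathcomp Require Import all_boot all_order all_algebra ring.
Set Implicit Arguments. Unset Strict Implicit. Unset Printing Implicit Defensive.
Import GRing.Theory.
Local Open Scope ring_scope.

Lemma sum_mul_eqr (R : pzSemiRingType) (I : finType) (F : I -> R) j :
  \sum_l F l * (l == j)%:R = F j.
Proof.
rewrite (bigD1 j) //= eqxx mulr1 big1 ?addr0 // => l /negbTE->.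
by rewrite mulr0.
Qed.

Lemma sum_mul_eql (R : pzSemiRingType) (I : finType) (F : I -> R) i :
  \sum_l (i == l)%:R * F l = F i.
Proof.
rewrite (bigD1 i) //= eqxx mul1r big1 ?addr0 // => l.
by rewrite eq_sym => /negbTE->; rewrite mul0r.
Qed.

Lemma sum_inv_unique (R : pzSemiRingType) (I : finType) (L X Y : I -> I -> R) :
  (forall i j, \sum_l L i l * X l j = (i == j)%:R) ->
  (forall i j, \sum_l X i l * Y l j = (i == j)%:R) -> L =2 Y.
Proof.
move=> LX XY i j.
have -> : L i j = \sum_l L i l * \sum_m X l m * Y m j.
  by under eq_bigr do rewrite XY; rewrite sum_mul_eqr.
under eq_bigr do rewrite mulr_sumr.
rewrite exchange_big /= -[RHS](sum_mul_eql (Y^~ j)); apply: eq_bigr => m _.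
by rewrite -LX mulr_suml; apply: eq_bigr => l _; rewrite mulrA.
Qed.

Section ScalarMatrix.
Variable R : pzRingType.

Lemma mul_scalar_mxE m n (d : R) (X : 'M_(m, n)) i j :
  (d%:M *m X) i j = d * X i j.
Proof. by rewrite mul_scalar_mx mxE. Qed.

Lemma mul_mx_scalarE m n (d : R) (X : 'M_(m, n)) i j :
  (X *m d%:M) i j = X i j * d.
Proof.
rewrite mxE (bigD1 j) //= mxE eqxx mulr1n big1 ?addr0 // => l /negbTE nlj.
by rewrite mxE nlj mulr0n mulr0.
Qed.

Lemma trmx_scalar_mul m n (d : R) (X : 'M_(m, n)) : (d%:M *m X)^T = d%:M *m X^T.
Proof. by apply/matrixP => i j; rewrite [LHS]mxE !mul_scalar_mxE mxE. Qed.

Lemma trmx_mul_scalar m n (d : R) (X : 'M_(m, n)) : (X *m d%:M)^T = X^T *m d%:M.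
Proof. by apply/matrixP => i j; rewrite [LHS]mxE !mul_mx_scalarE mxE. Qed.

End ScalarMatrix.

Section AlgMatrix.
Variables (k : fieldType) (K : algType k).
Local Notation "F ^a" := (map_mx (in_alg K) F) (at level 2, format "F ^a").

Lemma scalar_mx_alg_comm m n (d : K) (F : 'M[k]_(m, n)) :
  d%:M *m F^a = F^a *m d%:M.
Proof.
apply/matrixP => i j.
by rewrite mul_scalar_mxE mul_mx_scalarE mxE mulr_algl mulr_algr.
Qed.

Lemma mulmx_alg_scalar_comm m n p (X : 'M[K]_(m, n)) (F : 'M[k]_(n, p)) d :
  X *m F^a *m d%:M = X *m d%:M *m F^a.
Proof. by rewrite -!mulmxA scalar_mx_alg_comm. Qed.

Lemma trmx_mul_alg_l m n p (F : 'M[k]_(m, n)) (X : 'M[K]_(n, p)) :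
  (F^a *m X)^T = X^T *m F^T^a.
Proof.
apply/matrixP => i j; rewrite !mxE; apply: eq_bigr => l _.
by rewrite !mxE mulr_algl mulr_algr.
Qed.

Lemma trmx_mul_alg_r m n p (X : 'M[K]_(m, n)) (F : 'M[k]_(n, p)) :
  (X *m F^a)^T = F^T^a *m X^T.
Proof.
apply/matrixP => i j; rewrite !mxE; apply: eq_bigr => l _.
by rewrite !mxE mulr_algl mulr_algr.
Qed.

Lemma mul_alg_mx_trE m n p (X : 'M[K]_(m, n)) (F : 'M[k]_n) (Y : 'M[K]_(p, n))
    s t :
  (X *m F^a *m Y^T) s t = \sum_i \sum_j F i j *: (X s i * Y t j).
Proof.
rewrite mxE exchange_big; apply: eq_bigr => j _; rewrite mxE mulr_suml.
by apply: eq_bigr => i _; rewrite !mxE mulr_algr scalerAl.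
Qed.

Lemma mul_alg_mxE m n p q (F : 'M[k]_(m, n)) (X : 'M[K]_(n, p))
    (G : 'M[k]_(p, q)) i j :
  (F^a *m X *m G^a) i j = \sum_l \sum_r (F i l * G r j) *: X l r.
Proof.
rewrite mxE exchange_big; apply: eq_bigr => r _; rewrite mxE mulr_suml.
by apply: eq_bigr => l _; rewrite !mxE mulr_algl mulr_algr scalerA mulrC.
Qed.

End AlgMatrix.

Section Hopf.
Variables (k : fieldType) (K : algType k) (H : hopf_algebra K).
Local Notation S := (hS H).
Local Notation Delta := (hDelta H).
Local Notation eps := (heps H).
Local Notation T := (htens H).

HB.instance Definition _ := GRing.isLinear.Build k K K *:%R S (hS_lin H).
HB.instance Definition _ :=
  GRing.isLinear.Build k K (hKK H) *:%R Delta (hDelta_lin H).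
HB.instance Definition _ :=
  GRing.isMonoidMorphism.Build K (hKK H) Delta (hDelta_one H, hDelta_mul H).
HB.instance Definition _ := GRing.isLinear.Build k K k *%R eps (heps_lin H).
HB.instance Definition _ :=
  GRing.isMonoidMorphism.Build K k eps (heps_one H, heps_mul H).
HB.instance Definition _ :=
  GRing.isLinear.Build k (hKK H) K *:%R (hS_id (h:=H)) (@hS_id_lin _ _ H).
HB.instance Definition _ :=
  GRing.isLinear.Build k (hKK H) K *:%R (hid_S (h:=H)) (@hid_S_lin _ _ H).
HB.instance Definition _ := bilinear_isBilinear.Build k K K (hKK H) *:%R *:%R T
  (let: And3 Tl Tr _ := htens_univ H in (Tl, Tr)).

Definition comatrix (I : finType) (c : I -> I -> K) : Prop :=
  (forall i j, Delta (c i j) = \sum_l T (c i l) (c l j)) /\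
  (forall i j, eps (c i j) = (i == j)%:R).

Lemma grouplike_antipode x : Delta x = T x x -> eps x = 1 ->
  S x * x = 1 /\ x * S x = 1.
Proof.
move=> Dx ex; split.
  by have := hantipode_l H x; rewrite Dx hS_id_tens ex scale1r.
by have := hantipode_r H x; rewrite Dx hid_S_tens ex scale1r.
Qed.

Section Comatrix.
Variables (I : finType) (c : I -> I -> K).
Hypothesis cc : comatrix c.

Lemma comatrix_antipodeL i j : \sum_l S (c i l) * c l j = (i == j)%:R.
Proof.
have := hantipode_l H (c i j); case: cc => -> ->.
rewrite linear_sum scaler_nat => <-.
by apply: eq_bigr => l _; rewrite -hS_id_tens.
Qed.

Lemma comatrix_antipodeR i j : \sum_l c i l * S (c l j) = (i == j)%:R.
Proof.
have := hantipode_r H (c i j); case: cc => -> ->.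
rewrite linear_sum scaler_nat => <-.
by apply: eq_bigr => l _; rewrite -hid_S_tens.
Qed.

Lemma comatrix_pair : comatrix (fun x y : I * I => c x.1 y.1 * c x.2 y.2).
Proof.
case: cc => cD cE; split=> [[i1 i2] [j1 j2]|[i1 i2] [j1 j2]] /=.
  rewrite hDelta_mul !cD mulr_suml -(pair_bigA _ (fun l1 l2 =>
    T (c i1 l1 * c i2 l2) (c l1 j1 * c l2 j2))) /=.
  apply: eq_bigr => l1 _; rewrite mulr_sumr; apply: eq_bigr => l2 _.
  by rewrite htens_mul.
by rewrite heps_mul !cE -natrM mulnb -xpair_eqE.
Qed.

End Comatrix.

Section ComatrixAntipode.
Variables (I : finType) (c : I -> I -> K).
Hypothesis cc : comatrix c.

Lemma antipodeM_comatrix i1 j1 i2 j2 :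
  S (c i1 j1 * c i2 j2) = S (c i2 j2) * S (c i1 j1).
Proof.
pose P (x y : I * I) := c x.1 y.1 * c x.2 y.2.
pose Q (x y : I * I) := S (c x.2 y.2) * S (c x.1 y.1).
apply: (@sum_inv_unique _ _ (fun x y => S (P x y)) P Q _ _ (i1, i2) (j1, j2)).
  exact: comatrix_antipodeL (comatrix_pair cc).
move=> [x1 x2] [y1 y2]; rewrite /P /Q /= -(pair_bigA _ (fun l1 l2 =>
  c x1 l1 * c x2 l2 * (S (c l2 y2) * S (c l1 y1)))) /=.
transitivity (\sum_l1 c x1 l1 * (x2 == y2)%:R * S (c l1 y1)).
  apply: eq_bigr => l1 _; rewrite -(comatrix_antipodeR cc) mulr_sumr mulr_suml.
  by apply: eq_bigr => l2 _; rewrite !mulrA.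
under eq_bigr do rewrite mulr_natr mulrnAl.
by rewrite sumrMnl (comatrix_antipodeR cc) -mulrnA mulnb -xpair_eqE.
Qed.

Lemma Delta_antipode_comatrix i j :
  Delta (S (c i j)) = \sum_l T (S (c l j)) (S (c i l)).
Proof.
case: (cc) => cD _.
apply: (@sum_inv_unique _ _ (fun i j => Delta (S (c i j)))
  (fun i j => Delta (c i j)) (fun i j => \sum_l T (S (c l j)) (S (c i l))))
  => {}i {}j.
  transitivity (Delta (\sum_l S (c i l) * c l j)).
    by rewrite linear_sum; apply: eq_bigr => l _; rewrite -hDelta_mul.
  by rewrite (comatrix_antipodeL cc) rmorph_nat.
transitivity (\sum_l \sum_n \sum_m T (c i n * S (c m j)) (c n l * S (c l m))).
  apply: eq_bigr => l _; rewrite cD mulr_suml; apply: eq_bigr => n _.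
  by rewrite mulr_sumr; apply: eq_bigr => m _; rewrite htens_mul.
rewrite exchange_big; transitivity
  (\sum_n \sum_m T (c i n * S (c m j)) (\sum_l c n l * S (c l m))).
  apply: eq_bigr => n _; rewrite exchange_big.
  by apply: eq_bigr => m _; rewrite linear_sumr.
transitivity (\sum_n T (c i n * S (c n j)) 1).
  apply: eq_bigr => n _.
  rewrite -[RHS](sum_mul_eql (fun m => T (c i n * S (c m j)) 1)).
  by apply: eq_bigr => m _; rewrite (comatrix_antipodeR cc) linearMnr mulr_natl.
by rewrite -linear_sumlz (comatrix_antipodeR cc) linearMnl -[in RHS](htens_one H).
Qed.

Lemma eps_antipode_comatrix i j : eps (S (c i j)) = (i == j)%:R.
Proof.
case: (cc) => _ cE.
rewrite -[LHS](sum_mul_eqr (fun l => eps (S (c i l)))).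
transitivity (eps (\sum_l S (c i l) * c l j)).
  by rewrite linear_sum; apply: eq_bigr => l _; rewrite -cE -heps_mul.
by rewrite (comatrix_antipodeL cc) rmorph_nat.
Qed.

Lemma comatrix_antipode_tr : comatrix (fun i j => S (c j i)).
Proof.
by split=> i j; rewrite ?Delta_antipode_comatrix ?eps_antipode_comatrix 1?eq_sym.
Qed.

End ComatrixAntipode.

Lemma semi_invariant_grouplike (J : finType) (P : J -> J -> K) (w : J -> k) D x :
  comatrix P -> (forall x, \sum_y w y *: P x y = w x *: D) -> w x != 0 ->
  Delta D = T D D /\ eps D = 1.
Proof.
case=> PD PE wP nzw; split.
  apply: (scalerI nzw).
  transitivity (\sum_y w y *: Delta (P x y)).
    rewrite -linearZ -wP linear_sum; apply: eq_bigr => y _; exact: linearZ_LR.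
  transitivity (\sum_z T (P x z) (w z *: D)).
    under eq_bigr do rewrite PD scaler_sumr.
    rewrite exchange_big /=; apply: eq_bigr => z _.
    by rewrite -wP linear_sumr; apply: eq_bigr => y _; rewrite linearZr.
  under eq_bigr do rewrite linearZr -linearZl.
  by rewrite -linear_sumlz wP linearZl.
apply: (mulfI nzw).
transitivity (\sum_y w y * eps (P x y)).
  by rewrite -linearZ -wP linear_sum; apply: eq_bigr => y _; exact: linearZ_LR.
under eq_bigr do rewrite PE mulr_natr mulrb eq_sym.
by rewrite -big_mkcond big_pred1_eq mulr1.
Qed.

Lemma comatrix_antipode_mx n (c : 'I_n -> 'I_n -> K) : comatrix c ->
  let M := \matrix_(i, j) c i j in
  map_mx S M *m M = 1%:M /\ M *m map_mx S M = 1%:M.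
Proof.
move=> cc M; split; apply/matrixP => i j;
  rewrite !mxE; under eq_bigr do rewrite !mxE.
  exact: comatrix_antipodeL.
exact: comatrix_antipodeR.
Qed.

Section Potential.
Variables (n : nat) (a : 'I_n.+1 -> 'I_n.+1 -> K) (W V : 'M[k]_n.+1) (D : K).
Hypotheses (ca : comatrix a) (WV : W *m V = 1%:M)
  (aWa : forall s t, \sum_i \sum_j W i j *: (a s i * a t j) = W s t *: D).
Local Notation "F ^a" := (map_mx (in_alg K) F) (at level 2, format "F ^a").
Local Notation A := (\matrix_(i, j) a i j).

Lemma potential_mx : A *m W^a *m A^T = D%:M *m W^a.
Proof.
apply/matrixP => s t; rewrite mul_alg_mx_trE mul_scalar_mxE mxE mulr_algr -aWa.
by apply: eq_bigr => i _; apply: eq_bigr => j _; rewrite !mxE.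
Qed.

Lemma potential_antipode_mx :
  map_mx S A *m W^T^a *m (map_mx S A)^T = (S D)%:M *m W^T^a.
Proof.
apply/matrixP => t s; rewrite mul_alg_mx_trE mul_scalar_mxE !mxE mulr_algr.
rewrite -linearZ -aWa linear_sum exchange_big /=; apply: eq_bigr => j _.
rewrite linear_sum; apply: eq_bigr => i _.
by rewrite !mxE linearZ_LR -(antipodeM_comatrix ca).
Qed.

Lemma potential_codet_unit : S D * D = 1 /\ D * S D = 1.
Proof.
have [[s t] nzW|W0] := pickP (fun st : 'I_n.+1 * 'I_n.+1 => W st.1 st.2 != 0).
  have wP x : \sum_y W y.1 y.2 *: (a x.1 y.1 * a x.2 y.2) = W x.1 x.2 *: D.
    by rewrite -aWa pair_bigA.
  have [DD eD] := semi_invariant_grouplike (comatrix_pair ca) wP nzW.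
  exact: grouplike_antipode.
suff W_0 : W = 0.
  move/matrixP: WV => /(_ 0 0).
  by rewrite W_0 mul0mx !mxE eqxx => /esym/eqP; rewrite oner_eq0.
by apply/matrixP => i j; rewrite mxE; apply/eqP/negbFE/(W0 (i, j)).
Qed.

Theorem antipode2_potential :
  map_mx S (map_mx S A) =
  D%:M *m ((W *m V^T)^a *m A *m (W^T *m V)^a) *m (S D)%:M.
Proof.
set B := map_mx S A; set C := map_mx S B.
have [BA _] := comatrix_antipode_mx ca.
have BC : B^T *m C^T = 1%:M.
  have := comatrix_antipode_mx (comatrix_antipode_tr ca).
  have -> : \matrix_(i, j) S (a j i) = B^T by apply/matrixP => i j; rewrite !mxE.
  by rewrite /C map_trmx => -[].
have [_ DSD] := potential_codet_unit.
have DSD1 : 1%:M = D%:M *m (S D)%:M :> 'M_n.+1 by rewrite -scalar_mxM DSD.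
have BW : B *m W^a = W^a *m A^T *m (S D)%:M.
  rewrite -[LHS]mulmx1 DSD1 mulmxA -(mulmxA B) -scalar_mx_alg_comm -potential_mx.
  by rewrite !mulmxA BA mul1mx.
have CW : C *m W^a = D%:M *m W^a *m B^T.
  have BWt : B *m W^T^a = (S D)%:M *m W^T^a *m C^T.
    by rewrite -potential_antipode_mx -!mulmxA BC mulmx1.
  have WCt : W^T^a *m C^T = D%:M *m B *m W^T^a.
    by rewrite -mulmxA BWt !mulmxA -DSD1 mul1mx.
  have := congr1 trmx WCt.
  rewrite trmx_mul_alg_l trmx_mul_alg_r trmx_scalar_mul !trmxK => ->.
  by rewrite mulmxA scalar_mx_alg_comm.
have WBt : W^T^a *m B^T = A *m W^T^a *m (S D)%:M.
  have := congr1 trmx BW.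
  by rewrite trmx_mul_alg_r trmx_mul_scalar trmx_mul_alg_l trmxK.
have WN : W^a = (W *m V^T)^a *m W^T^a.
  by rewrite -map_mxM -mulmxA -trmx_mul WV trmx1 mulmx1.
have WtN : W^T^a = (W^T *m V)^a *m W^a.
  by rewrite -map_mxM -mulmxA (mulmx1C WV) mulmx1.
have WVa : W^a *m V^a = 1%:M by rewrite -map_mxM WV map_mx1.
have WBt' : W^a *m B^T = (W *m V^T)^a *m A *m (W^T *m V)^a *m (S D)%:M *m W^a.
  by rewrite {1}WN -mulmxA WBt WtN !mulmxA mulmx_alg_scalar_comm.
rewrite -[LHS]mulmx1 -WVa mulmxA CW -[D%:M *m _ *m B^T]mulmxA WBt' !mulmxA.
by rewrite -mulmxA WVa mulmx1.
Qed.

End Potential.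
End Hopf.

Lemma ord2_cases (i : 'I_2) : i = 0 \/ i = 1.
Proof. by case: i => [[|[|//]] ?]; [left | right]; apply/val_inj. Qed.

Lemma big_ord2 (V : nmodType) (F : 'I_2 -> V) : \sum_(i < 2) F i = F 0 + F 1.
Proof. by rewrite big_ord_recl big_ord1; congr (F _ + F _); apply/val_inj. Qed.

(* [ext_coeff k i j] is the coefficient of x_i x_j in x2 x1 - x1 x2 - x1^2. *)
Definition jordan_rel_mx (k : fieldType) : 'M[k]_2 :=
  \matrix_(i, j) ext_coeff k i j.

Section JordanRelation.
Variables (k : fieldType) (K : algType k) (a : 'I_2 -> 'I_2 -> K).

Lemma jordan_coord_kernel (V : lmodType k) (Q : 'I_2 -> 'I_2 -> V) :
  (forall b, \sum_s \sum_t jordan_coord k s t b *: Q s t = 0) ->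
  forall s t, Q s t = ext_coeff k s t *: Q 1 0.
Proof.
move=> hQ; have := hQ 0; have := hQ 1; have := hQ 2.
rewrite !big_ord2 /jordan_coord /= !(scale0r, scale1r, add0r, addr0).
move=> Q11 /eqP; rewrite addr_eq0 => /eqP Q01 /eqP; rewrite addr_eq0 => /eqP Q00.
by move=> s t; case: (ord2_cases s) => ->; case: (ord2_cases t) => ->;
  rewrite /ext_coeff /= ?scaleN1r ?scale1r ?scale0r.
Qed.

Lemma rho_relation_coord b :
  rho_prod2 a 1 0 b - rho_prod2 a 0 1 b - rho_prod2 a 0 0 b =
  \sum_s \sum_t jordan_coord k s t b *:
    \sum_i \sum_j ext_coeff k i j *: (a s i * a t j).
Proof.
transitivity (\sum_i \sum_j ext_coeff k i j *: rho_prod2 a i j b).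
  rewrite !big_ord2 /ext_coeff /= !(scaleN1r, scale1r, scale0r, addr0).
  by rewrite addrC addrA addrAC.
rewrite /rho_prod2 pair_bigA [RHS]pair_bigA /=.
under eq_bigr do rewrite pair_bigA scaler_sumr.
under [RHS]eq_bigr do rewrite pair_bigA scaler_sumr.
rewrite exchange_big; apply: eq_bigr => [[s t]] _; apply: eq_bigr => [[i j]] _.
by rewrite /= !scalerA mulrC.
Qed.

Lemma jordan_potential :
  (forall b, rho_prod2 a 1 0 b - rho_prod2 a 0 1 b - rho_prod2 a 0 0 b = 0) ->
  forall s t, \sum_i \sum_j jordan_rel_mx k i j *: (a s i * a t j) =
              jordan_rel_mx k s t *: hom_codet a.
Proof.
move=> rel.
have pot : forall s t, \sum_i \sum_j ext_coeff k i j *: (a s i * a t j) =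
                       ext_coeff k s t *: hom_codet a.
  by apply: jordan_coord_kernel => b; rewrite -rho_relation_coord rel.
move=> s t; rewrite mxE -pot.
by apply: eq_bigr => i _; apply: eq_bigr => j _; rewrite mxE.
Qed.

End JordanRelation.

Definition mx22 (R : Type) (x y z w : R) : 'M[R]_2 :=
  \matrix_(i, j) if i == 0 then if j == 0 then x else y
                 else if j == 0 then z else w.

Section JordanMatrices.
Variable k : fieldType.
Local Notation W := (jordan_rel_mx k).
Local Notation V := (mx22 0 1 (-1) (-1) : 'M[k]_2).

Lemma jordan_rel_mx_twist :
  [/\ W *m V = 1%:M, W *m V^T = mx22 (-1) 2 0 (-1)
    & W^T *m V = mx22 (-1) (-2) 0 (-1)].
Proof.
split; apply/matrixP => i j; rewrite !mxE !big_ord2 !mxE /jordan_rel_mx;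
  by case: (ord2_cases i) => ->; case: (ord2_cases j) => ->;
     rewrite /ext_coeff /=; ring.
Qed.
End JordanMatrices.

Theorem lemma5p8 (k : fieldType) (K : algType k) (H : hopf_algebra K)
  (a : 'I_2 -> 'I_2 -> K) :
  bijective (hS H) ->
  jordan_comodule_algebra H a ->
  let S := hS H in
  let D := hom_codet a in
  exists2 Dinv : K, D * Dinv = 1 /\ Dinv * D = 1 &
  [/\ S (S (a 0 0)) = D * (a 0 0 - a 1 0 *+ 2) * Dinv,
      S (S (a 0 1)) = D * (a 0 1 + a 0 0 *+ 2 - a 1 1 *+ 2 - a 1 0 *+ 4) * Dinv,
      S (S (a 1 0)) = D * a 1 0 * Dinv &
      S (S (a 1 1)) = D * (a 1 1 + a 1 0 *+ 2) * Dinv].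
Proof.
move=> _ [rel aD aE] S D; rewrite {}/S {}/D.
have ca : comatrix H a by [].
have aWa := jordan_potential rel.
have [WV WVt WtV] := jordan_rel_mx_twist k.
have [SDD DSD] := potential_codet_unit ca WV aWa.
exists (hS H (hom_codet a)) => //.
have := antipode2_potential ca WV aWa; rewrite WVt WtV => /matrixP S2.
have {}S2 i j : hS H (hS H (a i j)) = hom_codet a *
    (\sum_l \sum_r ((mx22 (-1) 2 0 (-1) : 'M[k]_2) i l *
                    (mx22 (-1) (-2) 0 (-1) : 'M[k]_2) r j) *: a l r) *
    hS H (hom_codet a).
  have := S2 i j; rewrite mul_mx_scalarE mul_scalar_mxE mul_alg_mxE !mxE => ->.
  by congr (_ * _ * _); apply: eq_bigr => l _; apply: eq_bigr => r _; rewrite mxE.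
rewrite !S2 !big_ord2 /mx22 !mxE /=.
split; congr (_ * _ * _);
  rewrite ?(mulN1r, mulrN1, mulrN, mul0r, mulr0, opprK, oppr0, scale0r, scale1r,
            scaleNr, addr0, add0r, subr0) -?natrM ?scaler_nat //.
  by rewrite addrA [a 0 0 *+ 2 + _]addrC addrAC.
by rewrite addrC.
Qed.
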